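(* Any braid $b\in\mathcal{B}_3$ which is not a power of $\Delta_3$ can be written in a unique way in the form $\sigma_j^k\,b_1\,\Delta_3^{\ell}$, where $j=1$ or $j=2$, $k\ne0$ is an integer, $\ell$ is a (not necessarily even) integer, and $b_1$ is a word in $\sigma_1^2$ and $\sigma_2^2$ in reduced form such that, if $b_1$ is not the identity, the first term of $b_1$ is a non-zero even power of $\sigma_2$ if $j=1$, and a non-zero even power of $\sigma_1$ if $j=2$.
   Context: $\mathcal{B}_3$ is the braid group on three strands with standard generators $\sigma_1,\sigma_2$; $\Delta_3=\sigma_1\sigma_2\sigma_1$ is the Garside element. A word in $\sigma_1^2,\sigma_2^2$ in reduced form is a product of nonzero powers of $\sigma_1^2$ and $\sigma_2^2$ alternating between the two; its terms are these maximal powers. *)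

(* The braid group B_3 is given by its standard presentation
   < sigma1, sigma2 | sigma1 sigma2 sigma1 = sigma2 sigma1 sigma2 >:
   braids are words in the letters sigma_g^{+-1}, modulo the congruence
   generated by free cancellation and the braid relation. *)
From Stdlib Require Import Relations.
From mathcomp Require Import all_boot all_algebra.
Import GRing.Theory Num.Theory.

Definition gen := bool.
Definition s1 : gen := false.
Definition s2 : gen := true.

(* a letter (g, true) is sigma_g, (g, false) is sigma_g^{-1} *)
Definition letter := (gen * bool)%type.
Definition word := seq letter.

Definition gpow (g : gen) (k : int) : word :=
  match k with
  | Posz n => nseq n (g, true)
  | Negz n => nseq n.+1 (g, false)
  end.

Definition Delta : word := [:: (s1, true); (s2, true); (s1, true)].
Definition Delta_inv : word := [:: (s1, false); (s2, false); (s1, false)].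

Definition Delta_pow (l : int) : word :=
  match l with
  | Posz n => flatten (nseq n Delta)
  | Negz n => flatten (nseq n.+1 Delta_inv)
  end.

Inductive braid_step : word -> word -> Prop :=
| bs_cancel (u v : word) (g : gen) (s : bool) :
    braid_step (u ++ (g, s) :: (g, ~~ s) :: v) (u ++ v)
| bs_braid (u v : word) :
    braid_step (u ++ [:: (s1, true); (s2, true); (s1, true)] ++ v)
               (u ++ [:: (s2, true); (s1, true); (s2, true)] ++ v).

Definition braid_eq : word -> word -> Prop :=
  clos_refl_sym_trans word braid_step.

(* A word in sigma1^2, sigma2^2 in reduced form is recorded by its list of
   terms: (g, m) stands for the term (sigma_g^2)^m = sigma_g^(2m), m <> 0,
   and consecutive terms use different generators. *)
Definition rterm := (gen * int)%type.

Fixpoint reduced (b : seq rterm) : Prop :=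
  match b with
  | [::] => True
  | (g, m) :: b' =>
      m <> 0%R /\
      match b' with [::] => True | (g', _) :: _ => g' <> g end /\
      reduced b'
  end.

Definition eval_red (b : seq rterm) : word :=
  flatten (map (fun t => gpow t.1 (2 * t.2)%R) b).

Definition first_ok (j : gen) (b : seq rterm) : Prop :=
  match b with
  | [::] => True
  | (g, _) :: _ => g = ~~ j
  end.

Definition nf_data (j : gen) (k : int) (b1 : seq rterm) (l : int) : Prop :=
  k <> 0%R /\ reduced b1 /\ first_ok j b1.

Definition nf_word (j : gen) (k : int) (b1 : seq rterm) (l : int) : word :=
  gpow j k ++ eval_red b1 ++ Delta_pow l.

(* Multiplication on the left by a letter sigma_i^(+-1) defines a
   map on normal forms sigma_j^k b1 Delta^l (and the powers Delta^l): if i = j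
   it changes k; if i <> j and k is even, sigma_j^k is absorbed into b1;
   otherwise sigma_i^e sigma_j^k = sigma_j^-e sigma_i^(k-e) Delta^e, and
   Delta^e is moved to the right end, which swaps sigma_1 and sigma_2 in b1.
   These maps satisfy free cancellation, and both sides of the braid relation
   act as conjugation by Delta, so reading a word from the right computes an
   invariant of its braid.  Every word is equivalent to the normal form it
   computes (existence), and reading a normal form gives back that normal
   form (uniqueness). *)

From Stdlib Require Import Setoid Relations.
From mathcomp Require Import all_boot all_algebra zify.
Import GRing.Theory Num.Theory.
Local Open Scope ring_scope.

Lemma braid_step_catl w u v : braid_step u v -> braid_step (w ++ u) (w ++ v).
Proof.
case=> [u' v' g s|u' v'].
  by have := bs_cancel (w ++ u') v' g s; rewrite -!catA.
by have := bs_braid (w ++ u') v'; rewrite -!catA.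
Qed.

Lemma braid_step_catr w u v : braid_step u v -> braid_step (u ++ w) (v ++ w).
Proof.
case=> [u' v' g s|u' v'].
  by have := bs_cancel u' (v' ++ w) g s; rewrite -!catA.
by have := bs_braid u' (v' ++ w); rewrite -!catA.
Qed.

Lemma braid_eq_lift (f : word -> word) :
  (forall u v, braid_step u v -> braid_step (f u) (f v)) ->
  forall u v, braid_eq u v -> braid_eq (f u) (f v).
Proof.
move=> Hf u v; elim=> [x y /Hf|x|x y _|x y z _ Hxy _]; last exact: rst_trans Hxy.
- exact: rst_step.
- exact: rst_refl.
- exact: rst_sym.
Qed.

Add Parametric Relation : word braid_eq
  reflexivity proved by (rst_refl word braid_step)
  symmetry proved by (rst_sym word braid_step)
  transitivity proved by (rst_trans word braid_step)
  as braid_eq_rel.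

Lemma braid_eq_refl w : braid_eq w w. Proof. exact: rst_refl. Qed.
#[local] Hint Resolve braid_eq_refl : core.

Add Parametric Morphism : (@cat letter)
  with signature braid_eq ==> braid_eq ==> braid_eq as cat_braid_eq.
Proof.
move=> u u' Hu v v' Hv; transitivity (u' ++ v).
  exact: (braid_eq_lift (cat^~ v) (braid_step_catr v)).
exact: (braid_eq_lift (cat u') (braid_step_catl u')).
Qed.

Add Parametric Morphism (a : letter) : (cons a)
  with signature braid_eq ==> braid_eq as cons_braid_eq.
Proof. by move=> u v Huv; rewrite -(cat1s a u) -(cat1s a v) Huv. Qed.

Lemma braid_eq_cancel g s w : braid_eq ((g, s) :: (g, ~~ s) :: w) w.
Proof. exact/rst_step/(bs_cancel [::]). Qed.

Lemma braid_eq_braid (g : gen) :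
  braid_eq [:: (g, true); (~~ g, true); (g, true)] Delta.
Proof.
case: g; last by [].
by symmetry; apply: rst_step; exact: (bs_braid [::] [::]).
Qed.

Section WordPow.

Variables x x_inv : word.
Hypothesis mulxV : braid_eq (x ++ x_inv) [::].
Hypothesis mulVx : braid_eq (x_inv ++ x) [::].

Definition word_pow (k : int) : word :=
  match k with
  | Posz n => flatten (nseq n x)
  | Negz n => flatten (nseq n.+1 x_inv)
  end.

Lemma word_powS k : braid_eq (x ++ word_pow k) (word_pow (k + 1)).
Proof.
case: k => [n|[|n]].
- by have -> : Posz n + 1 = Posz n.+1 by lia.
- have -> : Negz 0 + 1 = 0 by lia.
  by rewrite /= cats0.
- have -> : Negz n.+1 + 1 = Negz n by lia.
  by rewrite /= catA mulxV.
Qed.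

Lemma word_powP k : braid_eq (x_inv ++ word_pow k) (word_pow (k - 1)).
Proof.
case: k => [[|n]|n].
- by have -> : Posz 0 - 1 = Negz 0 by lia.
- have -> : Posz n.+1 - 1 = Posz n by lia.
  by rewrite /= catA mulVx.
- by have -> : Negz n - 1 = Negz n.+1 by lia.
Qed.

Lemma word_powD a b : braid_eq (word_pow a ++ word_pow b) (word_pow (a + b)).
Proof.
case: a => n; elim: n => [|n IHn].
- by rewrite add0r.
- have -> : Posz n.+1 + b = (Posz n + b) + 1 by lia.
  by rewrite -word_powS -IHn catA.
- have -> : Negz 0 + b = b - 1 by lia.
  by rewrite -word_powP /= cats0.
- have -> : Negz n.+1 + b = (Negz n + b) - 1 by lia.
  by rewrite -word_powP -IHn catA.
Qed.

End WordPow.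

Lemma gpowE g k : gpow g k = word_pow [:: (g, true)] [:: (g, false)] k.
Proof.
have flatten_nseq1 (a : letter) n : flatten (nseq n [:: a]) = nseq n a.
  by elim: n => //= n ->.
by case: k => n /=; rewrite flatten_nseq1.
Qed.

Lemma gpowD g a b : braid_eq (gpow g a ++ gpow g b) (gpow g (a + b)).
Proof. by rewrite !gpowE; apply: word_powD; rewrite /= braid_eq_cancel. Qed.

Lemma mulDeltaV : braid_eq (Delta ++ Delta_inv) [::].
Proof. by rewrite /= !(braid_eq_cancel _ true). Qed.

Lemma mulVDelta : braid_eq (Delta_inv ++ Delta) [::].
Proof. by rewrite /= !(braid_eq_cancel _ false). Qed.

Lemma Delta_powD a b :
  braid_eq (Delta_pow a ++ Delta_pow b) (Delta_pow (a + b)).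
Proof.
have Delta_powE l : Delta_pow l = word_pow Delta Delta_inv l by case: l.
by rewrite !Delta_powE; apply: word_powD; [apply: mulDeltaV | apply: mulVDelta].
Qed.

Definition swap_letter (a : letter) : letter := (~~ a.1, a.2).

Lemma conj_word {x : word} {f : letter -> letter} :
  (forall a, braid_eq (x ++ [:: a]) (f a :: x)) ->
  forall w, braid_eq (x ++ w) (map f w ++ x).
Proof.
move=> Hx; elim=> [|a w IHw] /=; first by rewrite cats0.
by rewrite -cat1s catA Hx /= IHw.
Qed.

Lemma Delta_swap_pos g : braid_eq (Delta ++ [:: (g, true)]) ((~~ g, true) :: Delta).
Proof.
by rewrite -{1}(braid_eq_braid (~~ g)) -(braid_eq_braid g) negbK.
Qed.

Lemma Delta_swap a : braid_eq (Delta ++ [:: a]) (swap_letter a :: Delta).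
Proof.
case: a => g [|]; first exact: Delta_swap_pos.
rewrite /swap_letter /=.
transitivity ((~~ g, false) :: ((~~ g, true) :: Delta) ++ [:: (g, false)]).
  by rewrite cat_cons braid_eq_cancel.
by rewrite -Delta_swap_pos -catA /= braid_eq_cancel ?cats0.
Qed.

Lemma Delta_inv_swap a : braid_eq (Delta_inv ++ [:: a]) (swap_letter a :: Delta_inv).
Proof.
have swap_Delta : braid_eq (a :: Delta) (Delta ++ [:: swap_letter a]).
  by rewrite Delta_swap /swap_letter negbK; case: a.
transitivity (Delta_inv ++ (a :: Delta) ++ Delta_inv).
  by rewrite cat_cons mulDeltaV.
by rewrite swap_Delta !catA mulVDelta.
Qed.

Definition sign (e : bool) : int := if e then 1 else -1.

Lemma cons_letterE i e w : (i, e) :: w = gpow i (sign e) ++ w.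
Proof. by case: e. Qed.

Lemma Delta_sign_conj e w :
  braid_eq (Delta_pow (sign e) ++ w) (map swap_letter w ++ Delta_pow (sign e)).
Proof.
case: e.
  exact: (conj_word Delta_swap).
exact: (conj_word Delta_inv_swap).
Qed.

Lemma map_swap_gpow g k : map swap_letter (gpow g k) = gpow (~~ g) k.
Proof. by case: k => n; rewrite map_nseq. Qed.

(* With j = ~~ i: sigma_i sigma_j^k = sigma_j^-1 (sigma_j sigma_i sigma_j) sigma_j^(k-1)
   = sigma_j^-1 Delta sigma_j^(k-1) = sigma_j^-1 sigma_i^(k-1) Delta. *)
Lemma letter_pos_gpow i k :
  braid_eq ((i, true) :: gpow (~~ i) k) ((~~ i, false) :: gpow i (k - 1) ++ Delta).
Proof.
transitivity
  ((~~ i, false) :: [:: (~~ i, true); (i, true); (~~ i, true)] ++ gpow (~~ i) (k - 1)).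
  rewrite /= braid_eq_cancel -[(~~ i, true) :: _]/(gpow (~~ i) 1 ++ _).
  by rewrite gpowD subrKC.
have := braid_eq_braid (~~ i); rewrite negbK => ->.
by rewrite (conj_word Delta_swap) map_swap_gpow negbK.
Qed.

Lemma letter_neg_gpow i k :
  braid_eq ((i, false) :: gpow (~~ i) k) ((~~ i, true) :: gpow i (k + 1) ++ Delta_inv).
Proof.
have := letter_pos_gpow (~~ i) (k + 1); rewrite negbK addrK -!cat_cons => ->.
by rewrite -catA mulDeltaV cats0.
Qed.

Lemma letter_gpow_Delta i e k :
  braid_eq ((i, e) :: gpow (~~ i) k)
           (gpow (~~ i) (- sign e) ++ gpow i (k - sign e) ++ Delta_pow (sign e)).
Proof.
case: e; first exact: letter_pos_gpow.
rewrite [sign false]/= opprK; exact: letter_neg_gpow.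
Qed.

Definition swap_terms (b : seq rterm) : seq rterm := map (fun t => (~~ t.1, t.2)) b.

Lemma swap_termsK : involutive swap_terms.
Proof. by elim=> [|[g m] b IHb] //=; rewrite negbK IHb. Qed.

Lemma eval_red_cons g m b : eval_red ((g, m) :: b) = gpow g (2 * m) ++ eval_red b.
Proof. by []. Qed.

Lemma map_swap_eval_red b : map swap_letter (eval_red b) = eval_red (swap_terms b).
Proof. by elim: b => [|[g m] b IHb] //=; rewrite map_cat map_swap_gpow IHb. Qed.

Lemma reduced_cons g m b : reduced ((g, m) :: b) <-> m <> 0 /\ first_ok g b /\ reduced b.
Proof.
case: b => [|[g' m'] b] //=.
suff -> : (g' <> g) <-> (g' = ~~ g) by [].
by case: g g' => [] [].
Qed.

Lemma first_ok_swap j b : first_ok j (swap_terms b) <-> first_ok (~~ j) b.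
Proof. by case: b => [|[g m] b] //=; case: g; case: j. Qed.

Lemma reduced_swap b : reduced (swap_terms b) <-> reduced b.
Proof.
elim: b => [|[g m] b IHb] //.
rewrite -[swap_terms _]/((~~ g, m) :: swap_terms b).
by rewrite !reduced_cons IHb first_ok_swap negbK.
Qed.

Lemma reduced_nil : reduced [::]. Proof. by []. Qed.
#[local] Hint Resolve reduced_nil : core.
Arguments reduced : simpl never.

Inductive nform := NfDelta of int | Nf of gen & int & seq rterm & int.

Definition nf_valid (x : nform) : Prop :=
  if x is Nf j k b l then nf_data j k b l else True.

Definition nf_eval (x : nform) : word :=
  match x with NfDelta l => Delta_pow l | Nf j k b l => nf_word j k b l end.

Definition nf_reduced (b : seq rterm) (l : int) : nform :=
  if b is (g, m) :: b' then Nf g (2 * m) b' l else NfDelta l.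

Definition nf_gpow (j : gen) (c : int) (b : seq rterm) (l : int) : nform :=
  if c == 0 then nf_reduced b l else Nf j c b l.

Definition nf_merge (j : gen) (c : int) (b : seq rterm) (l : int) : nform :=
  if b is (g, m) :: b' then
    if g == j then Nf j (c + 2 * m) b' l else Nf j c b l
  else Nf j c [::] l.

Definition nf_act (a : letter) (x : nform) : nform :=
  let: (i, e) := a in
  match x with
  | NfDelta l => Nf i (sign e) [::] l
  | Nf j k b l =>
    if i == j then nf_gpow j (k + sign e) b l
    else if (k %% 2 == 0)%Z then Nf i (sign e) ((j, (k %/ 2)%Z) :: b) l
    (* k odd: see letter_gpow_Delta and Delta_sign_conj *)
    else if k == sign e then nf_merge j (- sign e) (swap_terms b) (l + sign e)
    else Nf j (- sign e) ((i, ((k - sign e) %/ 2)%Z) :: swap_terms b) (l + sign e)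
  end.

Definition nf_Delta (x : nform) : nform :=
  match x with
  | NfDelta l => NfDelta (l + 1)
  | Nf j k b l => Nf (~~ j) k (swap_terms b) (l + 1)
  end.

Ltac nf_split_ifs :=
  unfold nf_gpow, nf_merge, nf_reduced;
  repeat (match goal with |- context [if ?c then _ else _] => case: ifP => ? end;
          rewrite /= ?swap_termsK ?negbK).

Ltac nf_compute :=
  nf_split_ifs; try done; try (exfalso; lia); repeat progress f_equal; try lia.

Lemma nf_act_valid a x : nf_valid x -> nf_valid (nf_act a x).
Proof.
rewrite /nf_data; case: a => i e; case: x => [l|j k b l] /=.
  by case: i; case: e.
case=> k0 [rb fo]; case: b rb fo => [|[g m] b] /=.
  move=> _ _; case: i; case: j; case: e => //=; nf_split_ifs;
  rewrite /nf_data /= ?reduced_cons ?reduced_swap ?first_ok_swap /=;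
  intuition (try lia; auto).
move=> /reduced_cons [m0 [fb rb]] Eg; subst g.
case: i; case: j fb => /= fb; case: e => //=; nf_split_ifs;
  rewrite /nf_data /= ?reduced_cons ?reduced_swap ?first_ok_swap /=;
  intuition (try lia; auto).
Qed.

Lemma nf_act_cancel i e x : nf_valid x -> nf_act (i, ~~ e) (nf_act (i, e) x) = x.
Proof.
case: x => [l|j k b l] /=.
  by case: i; case: e; nf_compute.
case=> k0 [rb fo]; case: b rb fo => [|[g m] b] /=;
  [move=> _ _ | move=> /reduced_cons [m0 _] ->];
  case: i; case: j; case: e => //=; nf_compute.
Qed.

Lemma nf_act_braid g x : nf_valid x ->
  nf_act (g, true) (nf_act (~~ g, true) (nf_act (g, true) x)) = nf_Delta x.
Proof.
case: x => [l|j k b l] /=.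
  by case: g; nf_compute.
case=> k0 [rb fo]; case: b rb fo => [|[g' m] b] /=;
  [move=> _ _ | move=> /reduced_cons [m0 _] ->];
  case: g; case: j => //=; nf_compute.
Qed.

Lemma nf_gpowE j c b l :
  braid_eq (gpow j c ++ eval_red b ++ Delta_pow l) (nf_eval (nf_gpow j c b l)).
Proof.
rewrite /nf_gpow; case: eqP => [->|_] //.
by case: b => [|[g m] b] //=; rewrite /nf_word catA.
Qed.

Lemma nf_mergeE j c b l :
  braid_eq (gpow j c ++ eval_red b ++ Delta_pow l) (nf_eval (nf_merge j c b l)).
Proof.
case: b => [|[g m] b] //=; case: eqP => [->|_] //.
by rewrite /nf_word -catA catA gpowD.
Qed.

Lemma nf_act_eval a x : braid_eq (a :: nf_eval x) (nf_eval (nf_act a x)).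
Proof.
case: a => i e; case: x => [l|j k b l] /=; first by case: e.
case: eqP => [<-|/eqP neq_ij].
  by rewrite /nf_word cons_letterE catA gpowD addrC nf_gpowE.
have -> : j = ~~ i by case: i j neq_ij => [] [].
case: ifP => [/eqP k_even|k_odd].
  rewrite [nf_eval _]/= /nf_word eval_red_cons.
  have -> : 2 * (k %/ 2)%Z = k by lia.
  by rewrite cons_letterE -catA.
rewrite /nf_word -cat_cons letter_gpow_Delta -!catA (catA (Delta_pow _)).
rewrite Delta_sign_conj map_swap_eval_red -!catA Delta_powD (addrC (sign e)).
case: eqP => [->|_]; first by rewrite subrr -[gpow i 0]/[::] nf_mergeE.
rewrite [nf_eval _]/= /nf_word eval_red_cons -catA.
have -> // : 2 * ((k - sign e) %/ 2)%Z = k - sign e.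
by move: k_odd; case: e => /=; lia.
Qed.

Definition nf_of (w : word) : nform := foldr nf_act (NfDelta 0) w.

Lemma nf_of_valid w : nf_valid (nf_of w).
Proof. by elim: w => //= a w; apply: nf_act_valid. Qed.

Lemma nf_ofE w : braid_eq w (nf_eval (nf_of w)).
Proof. by elim: w => //= a w IHw; rewrite -nf_act_eval -IHw. Qed.

Lemma nf_of_braid_eq {u v : word} : braid_eq u v -> nf_of u = nf_of v.
Proof.
have nf_of_step u' v' : braid_step u' v' -> nf_of u' = nf_of v'.
  case=> [w w' g s|w w']; rewrite /nf_of !foldr_cat; congr (foldr _ _ w).
    by rewrite -{1}(negbK s); exact: nf_act_cancel g (~~ s) _ (nf_of_valid w').
  exact: etrans (nf_act_braid s1 _ (nf_of_valid w'))
                (esym (nf_act_braid s2 _ (nf_of_valid w'))).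
by elim=> [x y /nf_of_step|x|x y _ ->|x y z _ -> _ ->].
Qed.

Lemma foldr_Delta_pow l0 l :
  foldr nf_act (NfDelta l0) (Delta_pow l) = NfDelta (l0 + l).
Proof.
have Delta_step l' : foldr nf_act (NfDelta l') Delta = NfDelta (l' + 1).
  by rewrite /=; nf_compute.
have Delta_inv_step l' : foldr nf_act (NfDelta l') Delta_inv = NfDelta (l' - 1).
  by rewrite /=; nf_compute.
case: l => n; elim: n => [|n IHn].
- by rewrite addr0.
- rewrite -[Delta_pow _]/(Delta ++ Delta_pow n).
  by rewrite foldr_cat IHn Delta_step; congr NfDelta; lia.
- exact: Delta_inv_step.
- rewrite -[Delta_pow _]/(Delta_inv ++ Delta_pow (Negz n)).
  by rewrite foldr_cat IHn Delta_inv_step; congr NfDelta; lia.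
Qed.

Lemma nf_act_same g e k b l : nf_act (g, e) (Nf g k b l) = nf_gpow g (k + sign e) b l.
Proof. by rewrite /= eqxx. Qed.

Lemma foldr_gpow g k b l : k != 0 -> first_ok g b ->
  foldr nf_act (nf_reduced b l) (gpow g k) = Nf g k b l.
Proof.
move=> k0 fo.
have act_reduced e : nf_act (g, e) (nf_reduced b l) = Nf g (sign e) b l.
  case: b fo => [|[g' m] b] //= ->.
  have even : ((2 * m) %% 2)%Z = 0 by lia.
  have half : ((2 * m) %/ 2)%Z = m by lia.
  by case: g; rewrite /= even half.
case: k k0 => [[|n]|n] // _; elim: n => [|n IHn].
- exact: act_reduced true.
- rewrite -[foldr _ _ _]/(nf_act (g, true) (foldr nf_act (nf_reduced b l) (gpow g n.+1))).
  rewrite IHn nf_act_same.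
  by have -> : Posz n.+1 + sign true = Posz n.+2 by rewrite /=; lia.
- exact: act_reduced false.
- rewrite -[foldr _ _ _]/(nf_act (g, false) (foldr nf_act (nf_reduced b l) (gpow g (Negz n)))).
  rewrite IHn nf_act_same.
  by have -> : Negz n + sign false = Negz n.+1 by rewrite /=; lia.
Qed.

Lemma foldr_eval_red b l : reduced b -> foldr nf_act (NfDelta l) (eval_red b) = nf_reduced b l.
Proof.
elim: b => [|[g m] b IHb] // /reduced_cons [m0 [fo rb]].
by rewrite eval_red_cons foldr_cat IHb // foldr_gpow //; apply/eqP; lia.
Qed.

Lemma nf_of_eval x : nf_valid x -> nf_of (nf_eval x) = x.
Proof.
rewrite /nf_of; case: x => [l|j k b l] /=; first by rewrite foldr_Delta_pow add0r.
case=> k0 [rb fo].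
by rewrite /nf_word !foldr_cat foldr_Delta_pow add0r foldr_eval_red // foldr_gpow //; apply/eqP.
Qed.

Theorem lemma2 (b : word) :
  ~ (exists n : int, braid_eq b (Delta_pow n)) ->
  exists j k b1 l,
    [/\ nf_data j k b1 l, braid_eq b (nf_word j k b1 l) &
      forall j' k' b1' l', nf_data j' k' b1' l' ->
        braid_eq b (nf_word j' k' b1' l') ->
        (j', k', b1', l') = (j, k, b1, l)].
Proof.
move=> not_Delta_pow; have := nf_ofE b; have := nf_of_valid b.
case E: (nf_of b) => [l|j k b1 l] valid_b b_eq.
  by case: not_Delta_pow; exists l.
exists j, k, b1, l; split=> // j' k' b1' l' valid' b_eq'.
have := nf_of_braid_eq b_eq'; rewrite E (nf_of_eval (Nf j' k' b1' l')) //.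
by case=> -> -> -> ->.
Qed.
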